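(* The sequence $0\to M\to\mathbb{Z}(Q)\xrightarrow{\pi_1}\operatorname{Wt}(Q)\to0$ is exact, where $\pi_2$ restricts to an isomorphism from $\ker(\pi_1)$ onto the image of $M$ in $\mathbb{Z}^d$, and there is a commutative diagram of abelian groups \[ \begin{array}{ccccccccc}0&\to&M&\to&\mathbb{Z}(Q)&\xrightarrow{\pi_1}&\operatorname{Wt}(Q)&\to&0\\ &&\|&&\downarrow{\scriptstyle\pi_2}&&\downarrow{\scriptstyle\nu}&&\\ 0&\to&M&\to&\mathbb{Z}^d&\xrightarrow{\deg}&\operatorname{Cl}(X)&\to&0\end{array} \] with exact rows. Moreover $\pi_2$ identifies the subsemigroup $\mathbb{N}(Q)\cap\ker(\pi_1)$ with $\sigma^\vee\cap M=\mathbb{N}^d\cap\ker(\deg)$. In particular, the rank of $\mathbb{Z}(Q)$ is $n+r$.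
   Context: Let $\mathbb{k}$ be an algebraically closed field and $X=\operatorname{Spec}R$ a normal affine toric variety of dimension $n$ with a torus-fixed point, $R=\mathbb{k}[\sigma^\vee\cap M]$, $\sigma\subset N\otimes\mathbb{R}$ strongly convex rational polyhedral, $N=M^\vee$. Let $\sigma(1)$ be the rays, $d=|\sigma(1)|$, $v_\rho$ primitive generators, $D_\rho$ toric prime divisors, torus-invariant divisors identified with $\mathbb{Z}^d$; exact sequence $0\to M\to\mathbb{Z}^d\xrightarrow{\deg}\operatorname{Cl}(X)\to0$, $u\mapsto\sum_\rho\langle u,v_\rho\rangle D_\rho$, $\deg D=[\mathcal{O}_X(D)]$. Cox ring $\mathbb{k}[x_\rho]$. Let $\mathscr{E}=(E_0=\mathcal{O}_X,E_1,\dots,E_r)$ be pairwise distinct rank one reflexive sheaves, $E_i=\mathcal{O}_X(D_i')$, and $Q$ its quiver of sections: vertices $0,\dots,r$; an arrow $a:i\to j$ with label $\operatorname{div}(a)\in\mathbb{N}^d$ for each irreducible $T_M$-invariant section $x^{\operatorname{div}(a)}$ of $\operatorname{Hom}(E_i,E_j)\cong H^0(\mathcal{O}_X(D_j'-D_i'))$ (irreducible: not in the image of multiplication through any $E_k$, $k\neq i,j$). $\operatorname{Wt}(Q)=\{\theta\in\mathbb{Z}^{Q_0}:\sum\theta_i=0\}$; $\pi:\mathbb{Z}^{Q_1}\to\operatorname{Wt}(Q)\oplus\mathbb{Z}^d$, $\chi_a\mapsto(\chi_{\mathsf{h}(a)}-\chi_{\mathsf{t}(a)},\operatorname{div}(a))$;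 $\mathbb{Z}(Q)=\pi(\mathbb{Z}^{Q_1})$, $\mathbb{N}(Q)=\pi(\mathbb{N}^{Q_1})$; $\pi_1,\pi_2$ the projections of $\mathbb{Z}(Q)$ to $\operatorname{Wt}(Q)$ and $\mathbb{Z}^d$; $\nu:\operatorname{Wt}(Q)\to\operatorname{Cl}(X)$, $\nu(\sum\theta_i\chi_i)=\sum\theta_i[E_i]$. *)

From HB Require Import structures.
From mathcomp Require Import all_boot all_order all_algebra.
Set Implicit Arguments. Unset Strict Implicit. Unset Printing Implicit Defensive.
Import Order.TTheory GRing.Theory Num.Theory.
Local Open Scope ring_scope.

(* Fan data: N = M^vee = Z^n, the rays v_rho are the columns of V : 'M_(n,d);
   <u, v_rho> = (u *m V) 0 rho for u in M = 'rV[int]_n. *)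

(* sigma = cone(v_rho) is strongly convex: no nontrivial nonnegative
   combination of the v_rho vanishes (coefficients may be taken integral). *)
Definition strongly_convex (n d : nat) (V : 'M[int]_(n, d)) : Prop :=
  forall lam : 'cV[int]_d, (forall rho, 0 <= lam rho 0) -> V *m lam = 0 -> lam = 0.

(* torus-fixed point <=> sigma spans N_R *)
Definition full_dim (n d : nat) (V : 'M[int]_(n, d)) : Prop :=
  \rank (map_mx (fun z : int => z%:~R : rat) V) = n.

Definition primitive_cols (n d : nat) (V : 'M[int]_(n, d)) : Prop :=
  forall (rho : 'I_d) (k : int) (w : 'cV[int]_n), col rho V = k *: w -> k = 1 \/ k = -1.

Definition distinct_cols (n d : nat) (V : 'M[int]_(n, d)) : Prop :=
  injective (fun rho : 'I_d => col rho V).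

Definition extremal_cols (n d : nat) (V : 'M[int]_(n, d)) : Prop :=
  forall (rho : 'I_d) (k : int) (lam : 'cV[int]_d),
    0 < k -> (forall i, 0 <= lam i 0) -> lam rho 0 = 0 -> k *: col rho V <> V *m lam.

Definition toric_fan_data (n d : nat) (V : 'M[int]_(n, d)) : Prop :=
  [/\ strongly_convex V, full_dim V, primitive_cols V, distinct_cols V & extremal_cols V].

(* The T_M-invariant sections of Hom(E_i,E_j) = H^0(O_X(D'_j - D'_i)) are the
   x^u, u in M, with <u,v_rho> + (D'_j - D'_i)_rho >= 0; its label is the
   exponent vector div = div(chi^u) + D'_j - D'_i in N^d. *)
Definition is_section (n d r : nat) (V : 'M[int]_(n, d)) (D' : 'I_r.+1 -> 'rV[int]_d)
    (i j : 'I_r.+1) (dv : 'rV[nat]_d) : Prop :=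
  exists u : 'rV[int]_n, map_mx Posz dv = u *m V + (D' j - D' i).

(* irreducible: not a product of sections i -> k -> j with k <> i, j *)
Definition is_arrow (n d r : nat) (V : 'M[int]_(n, d)) (D' : 'I_r.+1 -> 'rV[int]_d)
    (a : 'I_r.+1 * 'I_r.+1 * 'rV[nat]_d) : Prop :=
  let: (i, j, dv) := a in
  is_section V D' i j dv /\
  ~ (exists (k : 'I_r.+1) (dv1 dv2 : 'rV[nat]_d),
        [/\ k != i, k != j, is_section V D' i k dv1, is_section V D' k j dv2 &
            forall rho, dv ord0 rho = (dv1 ord0 rho + dv2 ord0 rho)%N]).

(* The arrows of the quiver of sections Q are the triples
   (tail, head, label) satisfying is_arrow. *)
Definition chi (r : nat) (i : 'I_r.+1) : 'rV[int]_r.+1 := delta_mx 0 i.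

Definition pi_arrow (d r : nat) (a : 'I_r.+1 * 'I_r.+1 * 'rV[nat]_d)
  : ('rV[int]_r.+1 * 'rV[int]_d)%type :=
  (chi a.1.2 - chi a.1.1, map_mx Posz a.2).

Definition ZQ (n d r : nat) (V : 'M[int]_(n, d)) (D' : 'I_r.+1 -> 'rV[int]_d)
    (z : ('rV[int]_r.+1 * 'rV[int]_d)%type) : Prop :=
  exists s : seq (int * ('I_r.+1 * 'I_r.+1 * 'rV[nat]_d)),
    (forall p, p \in s -> is_arrow V D' p.2) /\
    z = \sum_(p <- s) (pi_arrow p.2 *~ p.1).

Definition NQ (n d r : nat) (V : 'M[int]_(n, d)) (D' : 'I_r.+1 -> 'rV[int]_d)
    (z : ('rV[int]_r.+1 * 'rV[int]_d)%type) : Prop :=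
  exists s : seq ('I_r.+1 * 'I_r.+1 * 'rV[nat]_d),
    (forall a, a \in s -> is_arrow V D' a) /\
    z = \sum_(a <- s) pi_arrow a.

Definition Wt (r : nat) (th : 'rV[int]_r.+1) : Prop := \sum_i th 0 i = 0.

Definition nu (d r : nat) (Cl : zmodType) (deg : 'rV[int]_d -> Cl)
    (D' : 'I_r.+1 -> 'rV[int]_d) (th : 'rV[int]_r.+1) : Cl :=
  \sum_i deg (D' i) *~ th 0 i.

Definition zindep (T : zmodType) (m : nat) (f : 'I_m -> T) : Prop :=
  forall c : 'I_m -> int, \sum_k f k *~ c k = 0 -> forall k, c k = 0.

Definition has_rank (T : zmodType) (P : T -> Prop) (m : nat) : Prop :=
  (exists f : 'I_m -> T, (forall k, P (f k)) /\ zindep f) /\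
  (forall f : 'I_m.+1 -> T, (forall k, P (f k)) -> ~ zindep f).

From HB Require Import structures.
From mathcomp Require Import all_boot all_order all_algebra.
From mathcomp Require Import ring lra zify.
From Stdlib Require Import Classical_Prop.
Set Implicit Arguments. Unset Strict Implicit. Unset Printing Implicit Defensive.
Import Order.TTheory GRing.Theory Num.Theory.
Local Open Scope ring_scope.

(* Every section x^u : E_i -> E_j has label u V + D'_j - D'_i, so the map
   z |-> pi_2 z - sum_i (pi_1 z)_i D'_i ([untwist]) sends Z(Q) into the image
   of M while pi_1 lands in Wt(Q); this gives the kernel of pi_1 and the
   commuting square.  Conversely every section factors into irreducible ones,
   so N(Q) contains (chi_j - chi_i, D) for every effective D = u V + D'_j - D'_i.
   Strong convexity gives, by Gordan's alternative, some u0 in the interior of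
   sigma^vee; adding multiples of u0 V makes any divisor effective, so Z(Q)
   contains M and lifts of all of Wt(Q).  For the rank, the rational
   coordinates (u, (pi_1 z)_1, ..., (pi_1 z)_r) are injective on Z(Q), and M
   together with the lifts of chi_j - chi_0 maps onto a basis of Q^(n+r). *)

Section Gordan.

Variable R : realFieldType.

Definition dot n (u w : 'rV[R]_n) : R := \sum_j u 0 j * w 0 j.

Lemma dotC n (u w : 'rV[R]_n) : dot u w = dot w u.
Proof. by apply: eq_bigr => j _; rewrite mulrC. Qed.

Lemma dotDl n (u v w : 'rV[R]_n) : dot (u + v) w = dot u w + dot v w.
Proof. by rewrite /dot -big_split; apply: eq_bigr => j _; rewrite mxE mulrDl. Qed.

Lemma dotZl n a (u w : 'rV[R]_n) : dot (a *: u) w = a * dot u w.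
Proof. by rewrite /dot mulr_sumr; apply: eq_bigr => j _; rewrite mxE mulrA. Qed.

Lemma dotBl n (u v w : 'rV[R]_n) : dot (u - v) w = dot u w - dot v w.
Proof. by rewrite -scaleN1r dotDl dotZl mulN1r. Qed.

Lemma dot_suml n k (F : 'I_k -> 'rV[R]_n) w :
  dot (\sum_i F i) w = \sum_i dot (F i) w.
Proof.
elim/big_rec2: _ => [|i x y _ <-]; last by rewrite dotDl.
by rewrite /dot big1 // => j _; rewrite mxE mul0r.
Qed.

Lemma dot_self_gt0 n (u : 'rV[R]_n) : u != 0 -> 0 < dot u u.
Proof.
case/matrix0Pn=> i0 [j uj_neq0]; rewrite (ord1 i0) in uj_neq0.
rewrite /dot (bigD1 j) //= ltr_pwDl ?sumr_ge0 // => [|i _]; rewrite -expr2.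
  by rewrite exprn_even_gt0.
exact: sqr_ge0.
Qed.

Definition positive_functional n k (f : 'I_k -> 'rV[R]_n) : Prop :=
  exists u, forall i, 0 < dot u (f i).

Definition nonneg_relation n k (f : 'I_k -> 'rV[R]_n) : Prop :=
  exists2 lam : 'I_k -> R,
    (forall i, 0 <= lam i) /\ (exists i, 0 < lam i) & \sum_i lam i *: f i = 0.

Lemma nonneg_relation_cons n k (f : 'I_k.+1 -> 'rV[R]_n) (lam : 'I_k -> R) c :
  (forall i, 0 <= lam i) -> (exists i, 0 < lam i) -> c <= 0 ->
  \sum_i lam i *: f (lift ord0 i) = c *: f ord0 -> nonneg_relation f.
Proof.
move=> lam_ge0 [i0 lam_i0] c_le0 lam_rel.
exists (fun i => if unlift ord0 i is Some j then lam j else - c).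
  split; first by move=> i; case: unlift; rewrite // oppr_ge0.
  by exists (lift ord0 i0); rewrite liftK.
rewrite big_ord_recl unlift_none.
under eq_bigr => i _ do rewrite liftK.
by rewrite lam_rel scaleNr addNr.
Qed.

Lemma exists_dominating_scale k (a b : 'I_k -> R) :
  (forall i, 0 < a i) -> exists K, forall i, 0 < K * a i + b i.
Proof.
move=> a_gt0; exists (1 + \sum_i `|b i| / a i) => i.
have ba_le : `|b i| / a i <= \sum_j `|b j| / a j.
  by rewrite (bigD1 i) //= lerDl sumr_ge0 // => j _; rewrite divr_ge0 // ltW.
have : (1 + `|b i| / a i) * a i <= (1 + \sum_j `|b j| / a j) * a i.
  by rewrite ler_pM2r ?lerD2l.
rewrite mulrDl mul1r divfK ?gt_eqF //.
have := ler_norm (- b i); rewrite normrN.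
move: (b i) `|b i| (a_gt0 i) => x y; lra.
Qed.

Lemma positive_functional_cons n k (f : 'I_k.+1 -> 'rV[R]_n) w :
  f ord0 != 0 -> dot w (f ord0) = 0 -> (forall i, 0 < dot w (f (lift ord0 i))) ->
  positive_functional f.
Proof.
move=> f0_neq0 w_f0 w_pos.
have [K K_pos] := exists_dominating_scale (fun i => dot (f ord0) (f (lift ord0 i))) w_pos.
exists (K *: w + f ord0) => i; rewrite dotDl dotZl.
case: (unliftP ord0 i) => [j ->|->]; first exact: K_pos.
by rewrite w_f0 mulr0 add0r dot_self_gt0.
Qed.

Definition orth_proj n (v w : 'rV[R]_n) : 'rV[R]_n := w - (dot w v / dot v v) *: v.

Lemma dot_orth_proj_l n (v w : 'rV[R]_n) : v != 0 -> dot (orth_proj v w) v = 0.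
Proof.
by move=> /dot_self_gt0 vv; rewrite dotBl dotZl -mulrA mulVf ?gt_eqF // mulr1 subrr.
Qed.

Lemma dot_orth_projC n (v w w' : 'rV[R]_n) :
  dot (orth_proj v w) w' = dot w (orth_proj v w').
Proof.
rewrite dotBl dotZl [RHS]dotC dotBl dotZl (dotC w' w) (dotC v w') (dotC v w).
by ring.
Qed.

(* Gordan's alternative, by induction on the number of vectors: either the
   first vector is already on the positive side of a functional for the
   others, or one projects the others orthogonally to it and recurses. *)
Theorem gordan n k (f : 'I_k -> 'rV[R]_n) : positive_functional f \/ nonneg_relation f.
Proof.
elim: k f => [|k IH] f; first by left; exists 0; case.
set v := f ord0; set g := fun i => f (lift ord0 i).
have [[u u_pos]|[lam [lam_ge0 lam_gt0] lam_rel]] := IH g; last first.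
  by right; apply: (nonneg_relation_cons lam_ge0 lam_gt0 (lexx 0)); rewrite scale0r.
have [uv_gt0|uv_le0] := ltrP 0 (dot u v).
  by left; exists u => i; case: (unliftP ord0 i) => [j ->|->]; [apply: u_pos|].
have [v0|v_neq0] := eqVneq v 0.
  right; exists (fun i => (i == ord0)%:R).
    by split=> [i|]; last exists ord0; rewrite ?eqxx ?ltr01.
  rewrite big_ord_recl -/v v0 scaler0 add0r big1 // => i _.
  by rewrite eq_sym (negbTE (neq_lift _ _)) scale0r.
have [[u' u'_pos]|[lam [lam_ge0 [i0 lam_i0]] lam_rel]] := IH (fun i => orth_proj v (g i)).
  left; apply: (positive_functional_cons (w := orth_proj v u')) => //.
    exact: dot_orth_proj_l v_neq0.
  by move=> i; rewrite dot_orth_projC; apply: u'_pos.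
pose C := \sum_i lam i * (dot (g i) v / dot v v).
have g_rel : \sum_i lam i *: g i = C *: v.
  apply/eqP; rewrite -subr_eq0 -[X in _ == X]lam_rel /orth_proj /C scaler_suml -sumrB.
  by apply/eqP/eq_bigr => i _; rewrite scalerBr scalerA.
have [C_le0|C_gt0] := lerP C 0.
  by right; apply: (nonneg_relation_cons lam_ge0 _ C_le0 g_rel); exists i0.
have : 0 < dot (\sum_i lam i *: g i) u.
  rewrite dot_suml (bigD1 i0) //= ltr_pwDl ?sumr_ge0 // => [|i _]; rewrite dotZl dotC.
    by rewrite mulr_gt0 //; apply: u_pos.
  by rewrite mulr_ge0 // ltW //; apply: u_pos.
by rewrite g_rel dotZl dotC pmulr_rgt0 // ltNge uv_le0.
Qed.

End Gordan.

Notation ratmx A := (map_mx (fun z : int => z%:~R : rat) A).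

Lemma clear_denominators k (x : 'I_k -> rat) :
  exists2 N : int, 0 < N & exists h : 'I_k -> int, forall i, N%:~R * x i = (h i)%:~R.
Proof.
elim: k x => [|k IH] x; first by exists 1 => //; exists (fun _ => 0); case.
have [N N_gt0 [h Nh]] := IH (fun j => x (lift ord0 j)).
exists (N * denq (x ord0)); first by rewrite mulr_gt0 ?denq_gt0.
exists (fun i => if unlift ord0 i is Some j then h j * denq (x ord0) else numq (x ord0) * N).
move=> i; case: (unliftP ord0 i) => [j ->|->]; first by rewrite !intrM -Nh mulrAC.
by rewrite !intrM [in RHS]numqE; ring.
Qed.

Lemma strongly_convex_interior n d (V : 'M[int]_(n, d)) :
  strongly_convex V -> exists u0 : 'rV[int]_n, forall rho, 0 < (u0 *m V) 0 rho.
Proof.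
move=> sc; have [[u u_pos]|[lam [lam_ge0 [rho0 lam_rho0]] lam_rel]] :=
  gordan (fun rho => (col rho (ratmx V))^T).
  have [N N_gt0 [h Nh]] := clear_denominators (fun j => u 0 j).
  exists (\row_j h j) => rho; rewrite -(ltr_int rat).
  have -> : ((\row_j h j *m V) 0 rho)%:~R = N%:~R * dot u (col rho (ratmx V))^T.
    rewrite mxE rmorph_sum mulr_sumr; apply: eq_bigr => j _.
    by rewrite !mxE rmorphM /= -Nh mulrA.
  by rewrite mulr_gt0 ?ltr0z.
exfalso; have [N N_gt0 [h Nh]] := clear_denominators lam.
have h_rho0 : 0 < h rho0 by rewrite -(ltr_int rat) -Nh mulr_gt0 ?ltr0z.
suff /colP/(_ rho0) : \col_rho h rho = 0 by rewrite !mxE => h0; rewrite h0 ltxx in h_rho0.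
apply: sc => [rho|]; first by rewrite mxE -(ler_int rat) -Nh mulr_ge0 ?lam_ge0 // ler0z ltW.
apply/colP => i; apply: (@intr_inj rat); rewrite !mxE rmorph_sum rmorph0.
have /rowP/(_ i) := congr1 (fun w => N%:~R *: w) lam_rel.
rewrite scaler0 !mxE summxE mulr_sumr => E; rewrite -[RHS]E; apply: eq_bigr => rho _.
by rewrite !mxE rmorphM /= -Nh; ring.
Qed.

Lemma ratmx_inj m k : injective (fun A : 'M[int]_(m, k) => ratmx A).
Proof.
move=> A B /matrixP AB; apply/matrixP => i j.
by have /eqP := AB i j; rewrite !mxE eqr_int => /eqP.
Qed.

Lemma rat_rows_int_dependent m (G : 'M[rat]_(m.+1, m)) :
  exists2 c : 'I_m.+1 -> int, (exists k, c k != 0) & \sum_k (c k)%:~R *: row k G = 0.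
Proof.
have : kermx G != 0 by rewrite kermx_eq0 -row_leq_rank -leqNgt rank_leq_col.
move=> /matrix0Pn[k0 [j0 ker_neq0]].
set x := row k0 (kermx G).
have [N N_gt0 [h Nh]] := clear_denominators (fun k => x 0 k).
exists h.
  exists j0; apply: contraNneq ker_neq0 => h0; have /eqP := Nh j0.
  by rewrite h0 mulf_eq0 intr_eq0 gt_eqF //= mxE.
have : x *m G = 0 by rewrite -row_mul mulmx_ker row0.
rewrite mulmx_sum_row => /(congr1 (fun v => N%:~R *: v)); rewrite scaler0 scaler_sumr => E.
by rewrite -[RHS]E; apply: eq_bigr => k _; rewrite scalerA Nh.
Qed.

Lemma mulrz_mxE (T : zmodType) m n (A : 'M[T]_(m, n)) c i j :
  (A *~ c) i j = A i j *~ c.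
Proof.
have mulrn_mxE k : (A *+ k) i j = A i j *+ k.
  by elim: k => [|k IH]; rewrite ?mulr0n ?mxE // !mulrS mxE IH.
by case: c => k; rewrite ?NegzE ?mulrNz ?mxE mulrn_mxE.
Qed.

Lemma zindep_coords (T : zmodType) m (phi : {additive T -> 'rV[rat]_m}) (f : 'I_m -> T) :
  (forall k, phi (f k) = 'e_k) -> zindep f.
Proof.
move=> phi_f c /(congr1 phi); rewrite raddf0 raddf_sum => /rowP sum0 k.
move: (sum0 k); rewrite summxE (bigD1 k) //= big1 => [|l l_neq_k].
  by rewrite raddfMz phi_f mulrz_mxE !mxE !eqxx addr0 => /eqP; rewrite intr_eq0 => /eqP.
by rewrite raddfMz phi_f mulrz_mxE mxE eq_sym (negbTE l_neq_k) mul0rz.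
Qed.

Lemma not_zindep_coords (T : zmodType) m (phi : {additive T -> 'rV[rat]_m})
    (f : 'I_m.+1 -> T) :
  (forall c : 'I_m.+1 -> int, phi (\sum_k f k *~ c k) = 0 -> \sum_k f k *~ c k = 0) ->
  ~ zindep f.
Proof.
move=> phi_inj f_indep.
have [c [k c_neq0] c_rel] := rat_rows_int_dependent (\matrix_k phi (f k)).
suff /f_indep/(_ k)/eqP : \sum_k f k *~ c k = 0 by rewrite (negbTE c_neq0).
apply: phi_inj; rewrite raddf_sum -[RHS]c_rel; apply: eq_bigr => l _.
by rewrite raddfMz rowK scaler_int.
Qed.

Definition wsum (T : zmodType) r (F : 'I_r.+1 -> T) (th : 'rV[int]_r.+1) : T :=
  \sum_i F i *~ th 0 i.

Fact wsum_is_zmod_morphism (T : zmodType) r (F : 'I_r.+1 -> T) : zmod_morphism (wsum F).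
Proof.
by move=> x y; rewrite /wsum -sumrB; apply: eq_bigr => i _; rewrite !mxE mulrzBr.
Qed.

HB.instance Definition _ (T : zmodType) r (F : 'I_r.+1 -> T) :=
  GRing.isZmodMorphism.Build _ _ (wsum F) (wsum_is_zmod_morphism F).

Lemma wsum_chi (T : zmodType) r (F : 'I_r.+1 -> T) j : wsum F (chi j) = F j.
Proof.
rewrite /wsum (bigD1 j) //= big1 => [|k k_neq_j]; first by rewrite mxE !eqxx addr0.
by rewrite mxE (negbTE k_neq_j) mulr0z.
Qed.

Lemma Wt_wsum r (th : 'rV[int]_r.+1) : Wt th <-> wsum (fun _ => 1 : int) th = 0.
Proof. by rewrite /Wt /wsum (eq_bigr _ (fun i _ => @intz (th 0 i))). Qed.

Lemma Wt_lift_eq0 r (th : 'rV[int]_r.+1) :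
  Wt th -> (forall j, th 0 (lift ord0 j) = 0) -> th = 0.
Proof.
rewrite /Wt big_ord_recl => Wt_th th_lift; apply/rowP => k; rewrite mxE.
case: (unliftP ord0 k) => [j ->|->] //.
by move: Wt_th; rewrite big1 ?addr0 // => j _; exact: th_lift.
Qed.

Lemma mulmxMzl (R : pzRingType) m k p (A : 'M[R]_(m, k)) (B : 'M[R]_(k, p)) c :
  (A *~ c) *m B = (A *m B) *~ c.
Proof. exact: (raddfMz (mulmxr B)). Qed.

Lemma nu_wsum d r (Cl : zmodType) (deg : {additive 'rV[int]_d -> Cl})
    (D' : 'I_r.+1 -> 'rV[int]_d) th :
  nu deg D' th = deg (wsum D' th).
Proof. by rewrite /nu /wsum raddf_sum; apply: eq_bigr => i _; rewrite raddfMz. Qed.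

Lemma pairB (U W : zmodType) (a a' : U) (b b' : W) : (a, b) - (a', b') = (a - a', b - b').
Proof. by []. Qed.

Section QuiverOfSections.

Variables (n d r : nat) (V : 'M[int]_(n, d)) (D' : 'I_r.+1 -> 'rV[int]_d).

Local Notation ZQ := (ZQ V D').
Local Notation NQ := (NQ V D').
Local Notation Lat := ('rV[int]_r.+1 * 'rV[int]_d)%type.

Lemma ZQ_ind (P : Lat -> Prop) :
  P 0 -> (forall x y, P x -> P y -> P (x + y)) ->
  (forall a c, is_arrow V D' a -> P (pi_arrow a *~ c)) -> forall z, ZQ z -> P z.
Proof.
move=> P0 PD Parr z [s [s_arr ->]]; rewrite big_seq.
by apply: big_ind => // -[c a] /s_arr; apply: Parr.
Qed.

Lemma ZQ0 : ZQ 0.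
Proof. by exists [::]; rewrite big_nil. Qed.

Lemma ZQD z z' : ZQ z -> ZQ z' -> ZQ (z + z').
Proof.
move=> [s [s_arr ->]] [s' [s'_arr ->]]; exists (s ++ s'); rewrite big_cat.
by split=> // p; rewrite mem_cat => /orP[/s_arr|/s'_arr].
Qed.

Lemma ZQMz z c : ZQ z -> ZQ (z *~ c).
Proof.
move=> [s [s_arr ->]]; exists [seq (p.1 * c, p.2) | p <- s]; split.
  by move=> p /mapP[q /s_arr q_arr ->].
by rewrite big_map mulrz_suml; apply: eq_bigr => p _; rewrite mulrzA.
Qed.

Lemma ZQB z z' : ZQ z -> ZQ z' -> ZQ (z - z').
Proof. by move=> Zz Zz'; rewrite -mulrN1z; apply/ZQD/ZQMz. Qed.

Lemma ZQ_sum k (F : 'I_k -> Lat) : (forall l, ZQ (F l)) -> ZQ (\sum_l F l).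
Proof. by move=> ZF; apply: big_ind => //; [exact: ZQ0 | exact: ZQD]. Qed.

Lemma NQD z z' : NQ z -> NQ z' -> NQ (z + z').
Proof.
move=> [s [s_arr ->]] [s' [s'_arr ->]]; exists (s ++ s'); rewrite big_cat.
by split=> // a; rewrite mem_cat => /orP[/s_arr|/s'_arr].
Qed.

Lemma NQ_ZQ z : NQ z -> ZQ z.
Proof.
move=> [s [s_arr ->]]; exists [seq (1, a) | a <- s]; split.
  by move=> p /mapP[a /s_arr a_arr ->].
by rewrite big_map; apply: eq_bigr => a _; rewrite mulr1z.
Qed.

Definition untwist (z : Lat) : 'rV[int]_d := z.2 - wsum D' z.1.

Fact untwist_is_zmod_morphism : zmod_morphism untwist.
Proof. by move=> x y; rewrite /untwist /= raddfB /= !opprD !opprK addrACA. Qed.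

HB.instance Definition _ :=
  GRing.isZmodMorphism.Build _ _ untwist untwist_is_zmod_morphism.

Lemma untwist_section i j dv :
  is_section V D' i j dv -> exists u, untwist (pi_arrow (i, j, dv)) = u *m V.
Proof. by move=> [u dvE]; exists u; rewrite /untwist /= raddfB /= !wsum_chi dvE addrK. Qed.

Lemma ZQ_Wt_untwist z : ZQ z -> Wt z.1 /\ exists u, untwist z = u *m V.
Proof.
move: z; apply: ZQ_ind.
- by split; [rewrite Wt_wsum raddf0 | exists 0; rewrite raddf0 mul0mx].
- move=> x y [/Wt_wsum Wx [u ux]] [/Wt_wsum Wy [v vy]].
  split; first by rewrite Wt_wsum raddfD /= Wx Wy addr0.
  by exists (u + v); rewrite raddfD /= ux vy mulmxDl.
move=> [[i j] dv] c [/untwist_section[u uE] _].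
split; first by rewrite Wt_wsum !raddfMz /= raddfB /= !wsum_chi subrr mul0rz.
by exists (u *~ c); rewrite raddfMz /= uE mulmxMzl.
Qed.

Lemma ZQ_ker_pi1 z : ZQ z -> z.1 = 0 -> exists u, z = (0, u *m V).
Proof.
case/ZQ_Wt_untwist=> _ [u uE] z1; exists u.
by move: uE; rewrite /untwist z1 raddf0 subr0; case: z z1 => ? ? /= -> ->.
Qed.

Lemma nu_pi1_eq_deg_pi2 (Cl : zmodType) (deg : {additive 'rV[int]_d -> Cl}) :
  (forall u, deg (u *m V) = 0) -> forall z, ZQ z -> nu deg D' z.1 = deg z.2.
Proof.
move=> deg_M z /ZQ_Wt_untwist[_ [u uE]].
by rewrite nu_wsum -[z.2](subrK (wsum D' z.1)) raddfD -/(untwist z) uE deg_M add0r.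
Qed.

Lemma NQ_label_ge0 z : NQ z -> forall rho, 0 <= z.2 0 rho.
Proof.
case=> s [_ ->] rho; rewrite (raddf_sum snd) summxE sumr_ge0 // => a _.
by rewrite /= mxE.
Qed.

Hypothesis classes_distinct : forall i k (u : 'rV[int]_n), D' k - D' i = u *m V -> k = i.

Lemma section_label_gt0 i k dv :
  is_section V D' i k dv -> k != i -> (0 < \sum_rho dv ord0 rho)%N.
Proof.
move=> [u dvE] k_neq_i; rewrite lt0n; apply: contraNneq k_neq_i => /eqP.
rewrite sum_nat_eq0 => /forallP dv0; apply/eqP/(classes_distinct (u := - u)).
have : map_mx Posz dv = 0.
  by apply/rowP => rho; rewrite !mxE; move/implyP/(_ isT)/eqP: (dv0 rho) => ->.
by rewrite dvE mulNmx => /eqP; rewrite addrC addr_eq0 => /eqP.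
Qed.

(* Induction on the total degree of the label: a reducible section is the
   product of two sections with nonzero labels, hence of smaller degree. *)
Lemma NQ_section i j dv : is_section V D' i j dv -> NQ (chi j - chi i, map_mx Posz dv).
Proof.
move Ndv : (\sum_rho dv ord0 rho)%N => N; elim/ltn_ind: N i j dv Ndv => N IH i j dv Ndv sec.
case: (classic (exists (k : 'I_r.+1) (dv1 dv2 : 'rV[nat]_d),
        [/\ k != i, k != j, is_section V D' i k dv1, is_section V D' k j dv2 &
            forall rho, dv ord0 rho = (dv1 ord0 rho + dv2 ord0 rho)%N])).
  move=> [k [dv1 [dv2 [k_neq_i k_neq_j sec1 sec2 dv_sum]]]].
  have N_sum : N = (\sum_rho dv1 ord0 rho + \sum_rho dv2 ord0 rho)%N.
    by rewrite -Ndv -big_split; apply: eq_bigr => rho _; exact: dv_sum.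
  have pos1 := section_label_gt0 sec1 k_neq_i.
  have pos2 := section_label_gt0 sec2 (contra_neq esym k_neq_j).
  have -> : (chi j - chi i, map_mx Posz dv) =
            (chi k - chi i, map_mx Posz dv1) + (chi j - chi k, map_mx Posz dv2).
    congr pair; first by rewrite [RHS]addrC addrA subrK.
    by apply/rowP => rho; rewrite !mxE dv_sum.
  by apply: NQD; [apply: (IH _ _ _ _ _ erefl sec1) | apply: (IH _ _ _ _ _ erefl sec2)];
    rewrite N_sum; lia.
by move=> irr; exists [:: (i, j, dv)]; split=> [a|]; rewrite ?big_seq1 // inE => /eqP->.
Qed.

Lemma NQ_effective i j (w : 'rV[int]_n) :
  (forall rho, 0 <= (w *m V + (D' j - D' i)) 0 rho) ->
  NQ (chi j - chi i, w *m V + (D' j - D' i)).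
Proof.
move=> D_ge0; set D := w *m V + (D' j - D' i) in D_ge0 *.
have dvE : map_mx Posz (map_mx absz D) = D.
  by apply/rowP => rho; rewrite mxE [map_mx _ _ _ _]mxE gez0_abs.
by rewrite -dvE; apply: NQ_section; exists w.
Qed.

Lemma NQ_M (w : 'rV[int]_n) : (forall rho, 0 <= (w *m V) 0 rho) -> NQ (0, w *m V).
Proof. by have := @NQ_effective 0 0 w; rewrite !subrr addr0; apply. Qed.

Lemma NQ_ker_pi1 D : (exists z, [/\ NQ z, z.1 = 0 & z.2 = D]) <->
  (exists u, (forall rho, 0 <= (u *m V) 0 rho) /\ D = u *m V).
Proof.
split=> [[z [Nz z1 <-]]|[u [u_ge0 ->]]]; last by exists (0, u *m V); split=> //; exact: NQ_M.
have [u zE] := ZQ_ker_pi1 (NQ_ZQ Nz) z1; exists u; split=> [rho|]; last by rewrite zE.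
by have := NQ_label_ge0 Nz rho; rewrite zE.
Qed.

Variable u0 : 'rV[int]_n.
Hypothesis u0_interior : forall rho, 0 < (u0 *m V) 0 rho.

Lemma shift_effective (D : 'rV[int]_d) : exists w : 'rV[int]_n,
  (forall rho, 0 <= (w *m V) 0 rho) /\ (forall rho, 0 <= (w *m V + D) 0 rho).
Proof.
pose K := \sum_rho `|D 0 rho|.
have D_le rho : - D 0 rho <= K.
  rewrite (le_trans (ler_norm _)) // normrN /K (bigD1 rho) //= lerDl.
  exact: sumr_ge0.
have K_ge0 : 0 <= K by apply: sumr_ge0.
have wVE rho : ((u0 *~ K) *m V) 0 rho = (u0 *m V) 0 rho * K.
  by rewrite mulmxMzl mulrz_mxE mulrzz.
exists (u0 *~ K); split=> rho; rewrite ?[(_ + D) _ _]mxE wVE;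
  move: (u0_interior rho) (D_le rho); move: ((u0 *m V) 0 rho) (D 0 rho) => a b; nia.
Qed.

Lemma ZQ_M (u : 'rV[int]_n) : ZQ (0, u *m V).
Proof.
have [w [w_eff wu_eff]] := shift_effective (u *m V).
have := ZQB (NQ_ZQ (NQ_M (w := w + u) _)) (NQ_ZQ (NQ_M w_eff)).
by rewrite pairB subrr mulmxDl addrAC subrr add0r; apply.
Qed.

Lemma ZQ_chiB i j : ZQ (chi j - chi i, D' j - D' i).
Proof.
have [w [w_eff wD_eff]] := shift_effective (D' j - D' i).
have := ZQB (NQ_ZQ (NQ_effective wD_eff)) (NQ_ZQ (NQ_M w_eff)).
by rewrite pairB subr0 addrAC subrr add0r.
Qed.

Lemma ZQ_lift_Wt th : Wt th -> exists z, ZQ z /\ z.1 = th.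
Proof.
move=> Wt_th; exists (\sum_k (chi k - chi 0, D' k - D' 0) *~ th 0 k); split.
  by apply: ZQ_sum => k; apply/ZQMz/ZQ_chiB.
have sum_chi : \sum_k chi k *~ th 0 k = th.
  by rewrite [RHS]row_sum_delta; apply: eq_bigr => k _; rewrite -scaler_int intz.
rewrite raddf_sum /=; under eq_bigr do rewrite raddfMz /= mulrzBl.
by rewrite sumrB sum_chi -mulrz_sumr Wt_th mulr0z subr0.
Qed.

Lemma ker_pi1_iso :
  (forall z, ZQ z -> z.1 = 0 -> exists u : 'rV[int]_n, z.2 = u *m V) /\
  (forall z z', ZQ z -> ZQ z' -> z.1 = 0 -> z'.1 = 0 -> z.2 = z'.2 -> z = z') /\
  (forall u : 'rV[int]_n, exists z, [/\ ZQ z, z.1 = 0 & z.2 = u *m V]).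
Proof.
split; first by move=> z Zz /(ZQ_ker_pi1 Zz)[u ->]; exists u.
split; first by move=> [? ?] [? ?] _ _ /= -> -> ->.
by move=> u; exists (0, u *m V); split=> //; exact: ZQ_M.
Qed.

Hypothesis full : full_dim V.

Lemma ratmx_mulmx_pinv (u : 'rV[int]_n) : ratmx (u *m V) *m pinvmx (ratmx V) = ratmx u.
Proof. by rewrite map_mxM -mulmxA mulmxVp ?mulmx1 // /row_free full. Qed.

Lemma mulmxV_inj : injective (fun u : 'rV[int]_n => u *m V).
Proof. by move=> u u' /= uV; apply: ratmx_inj; rewrite -!ratmx_mulmx_pinv uV. Qed.

Lemma upper_row_exact :
  (forall u : 'rV[int]_n, ZQ (0, u *m V)) /\
  injective (fun u : 'rV[int]_n => ((0 : 'rV[int]_r.+1), u *m V)) /\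
  (forall z, ZQ z -> (z.1 = 0 <-> exists u : 'rV[int]_n, z = (0, u *m V))) /\
  (forall z, ZQ z -> Wt z.1) /\
  (forall th, Wt th -> exists z, ZQ z /\ z.1 = th).
Proof.
split; first exact: ZQ_M.
split; first by move=> u u' [/mulmxV_inj].
split; first by move=> z Zz; split=> [|[u ->] //]; exact: ZQ_ker_pi1.
by split=> [z /ZQ_Wt_untwist[]|]; last exact: ZQ_lift_Wt.
Qed.

Definition coords (z : Lat) : 'rV[rat]_(n + r) :=
  row_mx (ratmx (untwist z) *m pinvmx (ratmx V)) (\row_j (z.1 0 (lift ord0 j))%:~R).

Fact coords_is_zmod_morphism : zmod_morphism coords.
Proof.
move=> x y; rewrite /coords (raddfB untwist) map_mxB mulmxBl opp_row_mx add_row_mx.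
by congr row_mx; apply/rowP => j; rewrite !mxE intrB.
Qed.

HB.instance Definition _ :=
  GRing.isZmodMorphism.Build _ _ coords coords_is_zmod_morphism.

Lemma coords_inj z : ZQ z -> coords z = 0 -> z = 0.
Proof.
move=> /ZQ_Wt_untwist[Wz [u uE]] /eqP; rewrite /coords uE ratmx_mulmx_pinv row_mx_eq0.
case/andP=> /eqP u_pinv0 /eqP/rowP z1_lift.
have z1_eq0 : z.1 = 0.
  apply: Wt_lift_eq0 => // j; have /eqP := z1_lift j.
  by rewrite !mxE intr_eq0 => /eqP.
have u_eq0 : u = 0 by apply: ratmx_inj; rewrite u_pinv0 map_mx0.
move: uE; rewrite /untwist z1_eq0 raddf0 subr0 u_eq0 mul0mx.
by case: z {Wz z1_lift} z1_eq0 => ? ? /= -> ->.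
Qed.

Definition ZQ_basis (k : 'I_(n + r)) : Lat :=
  match split k with
  | inl p => (0, 'e_p *m V)
  | inr j => (chi (lift ord0 j) - chi 0, D' (lift ord0 j) - D' 0)
  end.

Lemma coords_basis k : coords (ZQ_basis k) = 'e_k.
Proof.
rewrite -(splitK k) /ZQ_basis unsplitK /coords; case: (split k) => [p|j] /=.
  rewrite delta_mx_lshift /untwist /= raddf0 subr0 ratmx_mulmx_pinv map_delta_mx.
  by congr row_mx; apply/rowP => j; rewrite !mxE.
rewrite delta_mx_rshift /untwist /= (raddfB (wsum D')) /= !wsum_chi subrr map_mx0 mul0mx.
congr row_mx; apply/rowP => l; rewrite !mxE (inj_eq lift_inj) eqxx.
by rewrite [lift _ _ == _]eq_sym (negbTE (neq_lift _ _)) subr0; case: eqP.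
Qed.

Lemma ZQ_has_rank : has_rank ZQ (n + r).
Proof.
split.
  exists ZQ_basis; split; last exact: (zindep_coords (phi := coords)) coords_basis.
  by move=> k; rewrite /ZQ_basis; case: split => ?; [exact: ZQ_M | exact: ZQ_chiB].
move=> f f_ZQ; apply: (not_zindep_coords (phi := coords)) => c; apply: coords_inj.
by apply: ZQ_sum => k; apply: ZQMz.
Qed.

End QuiverOfSections.

Unset Implicit Arguments.

Theorem lemma2p8 (n d r : nat) (V : 'M[int]_(n, d))
    (Cl : zmodType) (deg : {additive 'rV[int]_d -> Cl})
    (D' : 'I_r.+1 -> 'rV[int]_d) :
  toric_fan_data V ->
  (forall D : 'rV[int]_d, deg D = 0 <-> exists u : 'rV[int]_n, D = u *m V) ->
  (forall c : Cl, exists D : 'rV[int]_d, deg D = c) ->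
  deg (D' 0) = 0 ->
  injective (fun i => deg (D' i)) ->
  ((forall u : 'rV[int]_n, ZQ V D' (0, u *m V)) /\
   injective (fun u : 'rV[int]_n => ((0 : 'rV[int]_r.+1), u *m V)) /\
   (forall z, ZQ V D' z -> (z.1 = 0 <-> exists u : 'rV[int]_n, z = (0, u *m V))) /\
   (forall z, ZQ V D' z -> Wt z.1) /\
   (forall th, Wt th -> exists z, ZQ V D' z /\ z.1 = th)) /\
  ((forall z, ZQ V D' z -> z.1 = 0 -> exists u : 'rV[int]_n, z.2 = u *m V) /\
   (forall z z', ZQ V D' z -> ZQ V D' z' -> z.1 = 0 -> z'.1 = 0 -> z.2 = z'.2 -> z = z') /\
   (forall u : 'rV[int]_n, exists z, [/\ ZQ V D' z, z.1 = 0 & z.2 = u *m V])) /\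
  (forall z, ZQ V D' z -> nu deg D' z.1 = deg z.2) /\
  (injective (fun u : 'rV[int]_n => u *m V) /\
   (forall u : 'rV[int]_n, deg (u *m V) = 0) /\
   (forall D, deg D = 0 -> exists u : 'rV[int]_n, D = u *m V) /\
   (forall c : Cl, exists D, deg D = c)) /\
  ((forall z z', NQ V D' z -> NQ V D' z' -> z.1 = 0 -> z'.1 = 0 -> z.2 = z'.2 -> z = z') /\
   (forall D : 'rV[int]_d,
      ((exists z, [/\ NQ V D' z, z.1 = 0 & z.2 = D]) <->
       (exists u : 'rV[int]_n, (forall rho, 0 <= (u *m V) 0 rho) /\ D = u *m V)) /\
      ((exists u : 'rV[int]_n, (forall rho, 0 <= (u *m V) 0 rho) /\ D = u *m V) <->
       ((forall rho, 0 <= D 0 rho) /\ deg D = 0)))) /\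
  has_rank (ZQ V D') (n + r).
Proof.
move=> [convex full _ _ _] deg_ker deg_surj _ deg_inj.
have deg_M u : deg (u *m V) = 0 by apply/deg_ker; exists u.
have classes i k u : D' k - D' i = u *m V -> k = i.
  by move=> Du; apply: deg_inj; apply/eqP; rewrite /= -subr_eq0 -raddfB Du deg_M.
have [u0 u0_int] := strongly_convex_interior convex.
split; first exact: (upper_row_exact classes u0_int full).
split; first exact: (ker_pi1_iso classes u0_int).
split; first exact: nu_pi1_eq_deg_pi2 deg_M.
split.
  by do !split; [exact: (mulmxV_inj full) | exact: deg_M | move=> D /deg_ker | exact: deg_surj].
split; last exact: (ZQ_has_rank classes u0_int full).
split; first by move=> [? ?] [? ?] _ _ /= -> -> ->.
move=> D; split; first exact: (NQ_ker_pi1 classes).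
by split=> [[u [u_ge0 ->]] | [D_ge0 /deg_ker[u uD]]]; [split | exists u; rewrite -uD].
Qed.
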